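(* Let $p\ge1$ and let $u,v\in E_1$ be such that the sequences $(d^u_n)_{n}$ and $(d^v_n)_{n}$ are compatible. Then $\mathcal L^u$ and $\mathcal L^v$ are compatible.
   Context: $X=\{0,\dots,p\}$; $\mathcal G_{S_p}$ is generated by $e_1,\dots,e_p$ acting on $X^\infty$ by $e_i(0w)=i\,e_i(w)$, $e_i(iw)=0w$, $e_i(jw)=jw$ for $j\notin\{0,i\}$; $\Gamma^p_w$ is the Schreier graph on the orbit of $w$ (edges $x$—$e_i(x)$), with graph distance $d$. $E_1$ is the set of $w$ with $\Gamma^p_w$ one-ended; each $w\in E_1$ has an infinite decomposition $w=0^ka_1u_1a_2u_2\cdots$ ($k\ge0$, $a_j\in\{1,\dots,p\}$, $a_{j+1}\ne a_j$, $u_j\in\{0,a_j\}^\ast$ finite). Let $N_j=k+j+\sum_{\ell\le j}|u_\ell|$. The path of cycles of $w$ consists of the $e_{a_j}$-cycles $P^w_j$ with vertex sets $\{0,a_j\}^{N_j}a_{j+1}u_{j+1}\cdots$; $\mathcal L^w=(2^{N_j})_{j\ge1}$. Put $w(0)=w$ and $w(j)=0^{N_j}a_{j+1}u_{j+1}a_{j+2}u_{j+2}\cdots$ (the common vertex of $P^w_j$ and $P^w_{j+1}$), and $d^w_j=d(w(j-1),w(j))$ for $j\ge1$. Integer sequences $(x_i),(y_i)$ are compatible if there exist $l,h$ with $x_{l+n}=y_{h+n}$ for all $n$. *)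

From Stdlib Require List.
From Stdlib Require Import ClassicalEpsilon.
From mathcomp Require Import all_boot.

Set Implicit Arguments.
Unset Strict Implicit.
Unset Printing Implicit Defensive.

(* Alphabet X = {0,...,p} is 'I_p.+1; infinite words X^oo are nat -> 'I_p.+1. *)
Definition word (p : nat) := nat -> 'I_p.+1.

(* The generator e_i (meaningful for i in {1..p}):
   e_i(0w) = i e_i(w), e_i(iw) = 0w, e_i(jw) = jw for j not in {0,i}. *)
Definition gen (p : nat) (i : 'I_p.+1) (w : word p) : word p :=
  fun n =>
    if all (fun t => w t == ord0) (iota 0 n) then
      (if w n == ord0 then i else if w n == i then ord0 else w n)
    else w n.

Definition adj (p : nat) (x y : word p) : Prop :=
  exists i : 'I_p.+1, i != ord0 /\ (y = gen i x \/ x = gen i y).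

Fixpoint walk (p : nat) (n : nat) (x y : word p) : Prop :=
  match n with
  | 0 => x = y
  | n'.+1 => exists z, adj x z /\ walk n' z y
  end.

(* vertex set of the Schreier graph Gamma_w: the orbit of w *)
Definition in_orbit (p : nat) (w x : word p) : Prop := exists n, walk n w x.

(* graph distance d(x,y) (0 if x,y lie in different orbits; never used then) *)
Definition walkb (p : nat) (x y : word p) (n : nat) : bool :=
  if excluded_middle_informative (walk n x y) then true else false.

Definition dist (p : nat) (x y : word p) : nat :=
  match excluded_middle_informative (exists n, walkb x y n) with
  | left H => ex_minn H
  | right _ => 0
  end.

Fixpoint walk_avoid (p : nat) (K : list (word p)) (n : nat) (x y : word p)
  : Prop :=
  match n with
  | 0 => x = y /\ ~ List.In x K
  | n'.+1 => ~ List.In x K /\ exists z, adj x z /\ walk_avoid K n' z y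
  end.

Definition conn_off (p : nat) (K : list (word p)) (x y : word p) : Prop :=
  exists n, walk_avoid K n x y.

Definition infinite_comp (p : nat) (K : list (word p)) (x : word p) : Prop :=
  forall s : list (word p), exists y, conn_off K x y /\ ~ List.In y s.

Definition one_ended (p : nat) (w : word p) : Prop :=
  forall K : list (word p),
    exists x, in_orbit w x /\ infinite_comp K x /\
      forall y, in_orbit w y -> infinite_comp K y -> conn_off K x y.

Definition E1 (p : nat) (w : word p) : Prop := one_ended w.

(* Decomposition data w = 0^k a_1 u_1 a_2 u_2 ... (indices j >= 1 are used;
   the values a 0, u 0 are irrelevant). *)
Definition Nj (p : nat) (k : nat) (u : nat -> seq 'I_p.+1) (j : nat) : nat :=
  k + j + \sum_(1 <= l < j.+1) size (u l).

Definition is_decomp (p : nat) (w : word p) (k : nat) (a : nat -> 'I_p.+1)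
  (u : nat -> seq 'I_p.+1) : Prop :=
  (forall n, n < k -> w n = ord0) /\
  (forall j, 1 <= j ->
     [/\ a j != ord0,
         a j.+1 != a j,
         all (fun x => (x == ord0) || (x == a j)) (u j),
         w (Nj k u j.-1) = a j &
         forall t, t < size (u j) -> w (Nj k u j.-1 + 1 + t) = nth ord0 (u j) t]).

(* w(0) = w, w(j) = 0^{N_j} a_{j+1} u_{j+1} ... *)
Definition wj (p : nat) (w : word p) (k : nat) (u : nat -> seq 'I_p.+1)
  (j : nat) : word p :=
  if j is 0 then w else fun n => if n < Nj k u j then ord0 else w n.

(* (d^w_j)_{j>=1}, reindexed from 0: dseq n = d^w_{n+1} *)
Definition dseq (p : nat) (w : word p) (k : nat) (u : nat -> seq 'I_p.+1)
  (n : nat) : nat :=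
  dist (wj w k u n) (wj w k u n.+1).

(* L^w = (2^{N_j})_{j>=1}, reindexed from 0 *)
Definition Lseq (p : nat) (k : nat) (u : nat -> seq 'I_p.+1) (n : nat) : nat :=
  2 ^ Nj k u n.+1.

Definition compatible (x y : nat -> nat) : Prop :=
  exists l h, forall n, x (l + n) = y (h + n).

From mathcomp Require Import all_boot zify.
From Stdlib Require Import FunctionalExtensionality ClassicalEpsilon.

Set Implicit Arguments.
Unset Strict Implicit.
Unset Printing Implicit Defensive.

(* The words w(j) and w(j+1) agree from position N := N_(j+1) on, their first
   N letters lie in {0, a} for a := a_(j+1), and their N-th letter a_(j+2) is
   neither 0 nor a.  On such words e_a is an odometer: reading the letter 0 as
   the binary digit 1 and a as 0, e_a adds 1 modulo 2^N.  This reading extends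
   to an index on all words that moves by at most one modulo 2^N along every
   edge of the Schreier graph, so d(w(j), w(j+1)) is the cyclic distance of the
   indices 2^N_j - 1 + 2^(N_j + 1) q and 2^N - 1, an odd multiple of 2^N_j.
   Thus d^w_(j+1) has 2-adic valuation N_j, and compatibility passes from the
   distance sequences to the sequences (2^N_j). *)

Definition cdist (M m n : nat) : nat :=
  minn (m - n + (n - m)) (M - (m - n + (n - m))).

Lemma cdist_sym M m n : cdist M m n = cdist M n m.
Proof. by rewrite /cdist addnC. Qed.

Lemma modn_succ M m : m < M -> (m + 1) %% M = if m.+1 == M then 0 else m.+1.
Proof.
move=> ltmM; case: eqP => [<-|ne_mM]; first by rewrite addn1 modnn.
by rewrite modn_small; lia.
Qed.

Lemma cdist_succ_le M m n : m < M -> n < M ->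
  cdist M ((m + 1) %% M) n <= (cdist M m n).+1.
Proof. move=> ltmM ltnM; rewrite modn_succ // /cdist; case: eqP; lia. Qed.

Lemma cdist_le_succ M m n : m < M -> n < M ->
  cdist M m n <= (cdist M ((m + 1) %% M) n).+1.
Proof. move=> ltmM ltnM; rewrite modn_succ // /cdist; case: eqP; lia. Qed.

Lemma cdist_pow2_odd m N q : m < N -> 2 ^ m - 1 + 2 ^ m.+1 * q < 2 ^ N ->
  exists r, cdist (2 ^ N) (2 ^ m - 1 + 2 ^ m.+1 * q) (2 ^ N - 1) = 2 ^ m * r.*2.+1.
Proof.
move=> ltmN.
have -> : 2 ^ N = 2 ^ m.+1 * 2 ^ (N - m.+1) by rewrite -expnD subnKC.
rewrite expnS; have := expn_gt0 2 m.
move: (2 ^ m) (2 ^ (N - m.+1)) => P E P_gt0 lt_idx.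
have ltqE : q < E.
  case: (ltnP q E) => // leEq.
  have : P * E <= P * q by rewrite leq_mul2l leEq orbT.
  nia.
have [r ->] : exists r, E = q + 1 + r by exists (E - q - 1); lia.
rewrite /cdist; case: (leqP r q) => h.
  exists r; have : P * r <= P * q by rewrite leq_mul2l h orbT.
  nia.
exists q; have : P * q <= P * r by rewrite leq_mul2l (ltnW h) orbT.
nia.
Qed.

Lemma logn2_pow2_odd m r : logn 2 (2 ^ m * r.*2.+1) = m.
Proof.
rewrite lognM ?expn_gt0 // pfactorK // logn_coprime ?addn0 //.
by rewrite coprime_sym coprimen2 /= odd_double.
Qed.

Section SchreierGraph.
Variable p : nat.
Implicit Types x y z : word p.

Lemma adj_sym x y : adj x y -> adj y x.
Proof. by case=> i [i_neq0 xy]; exists i; split => //; tauto. Qed.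

Lemma walk_rcons n x y z : walk n x y -> adj y z -> walk n.+1 x z.
Proof.
elim: n x => [|n IHn] x /=; first by move=> -> yz; exists z.
by case=> x' [xx' x'y] yz; exists x'; split => //; apply: IHn.
Qed.

Lemma walk_sym n x y : walk n x y -> walk n y x.
Proof.
elim: n x => [|n IHn] x /=; first by move->.
by case=> x' [xx' x'y]; apply: walk_rcons (IHn _ x'y) (adj_sym xx').
Qed.

Lemma walk_iter_gen i k z : i != ord0 -> walk k z (iter k (gen i) z).
Proof.
move=> i_neq0; elim: k => [|k IHk] //=.
by apply: walk_rcons IHk _; exists i; split => //; left.
Qed.

Lemma walkbP n x y : reflect (walk n x y) (walkb x y n).
Proof. by rewrite /walkb; case: excluded_middle_informative; constructor. Qed.

Lemma dist_shortest n x y :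
  walk n x y -> (forall m, walk m x y -> n <= m) -> dist x y = n.
Proof.
move=> xy_n shortest; rewrite /dist.
case: excluded_middle_informative => [ex|]; last by case; exists n; apply/walkbP.
case: ex_minnP => m /walkbP xy_m minm.
by apply/eqP; rewrite eqn_leq minm ?shortest //; apply/walkbP.
Qed.

Definition shift z : word p := fun n => z n.+1.

Lemma gen_head i z :
  gen i z 0 = if z 0 == ord0 then i else if z 0 == i then ord0 else z 0.
Proof. by []. Qed.

Lemma shift_gen i z :
  shift (gen i z) = if z 0 == ord0 then gen i (shift z) else shift z.
Proof.
apply: functional_extensionality => n; rewrite /shift /gen.
have -> : iota 0 n.+1 = 0 :: [seq 1 + t | t <- iota 0 n] by rewrite -iotaDl.
by rewrite /= all_map; case: (z 0 =P ord0).
Qed.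

Lemma gen_eq_from i z N :
  z N != ord0 -> z N != i -> forall t, N <= t -> gen i z t = z t.
Proof.
move=> zN0 zNi t; rewrite leq_eqVlt /gen => /orP[/eqP <-|ltNt].
  by rewrite (negbTE zN0) (negbTE zNi); case: ifP.
case: ifP => // zeros_t.
have /(allP zeros_t)/eqP zN : N \in iota 0 t by rewrite mem_iota.
by rewrite zN eqxx in zN0.
Qed.

Lemma iter_gen_eq_from i k z N :
  z N != ord0 -> z N != i -> forall t, N <= t -> iter k (gen i) z t = z t.
Proof.
move=> zN0 zNi; elim: k => [|k IHk] t leNt //=.
have zkN : iter k (gen i) z N = z N by apply: IHk.
by rewrite (gen_eq_from (N := N)) ?zkN // IHk.
Qed.

End SchreierGraph.

Section Odometer.
Variables (p : nat) (a : 'I_p.+1).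
Implicit Types x y z : word p.

Definition foreign (c : 'I_p.+1) := (c != ord0) && (c != a).

Fixpoint has_foreign N z :=
  if N is N'.+1 then foreign (z 0) || has_foreign N' (shift z) else false.

(* Binary digits, least significant first: on {0,a}^N digit t is 1 iff z t = 0,
   so that gen a adds 1.  The digits up to a foreign letter are all 1, which
   makes the index of a word with a foreign letter invariant under every gen. *)
Fixpoint cycle_index N z : nat :=
  if N is N'.+1 then
    ((z 0 != a) || has_foreign N' (shift z)) + 2 * cycle_index N' (shift z)
  else 0.

Definition binary_prefix N z := forall t, t < N -> (z t == ord0) || (z t == a).

(* x and y are vertices of the e_a-cycle {0,a}^N y_N y_(N+1) ... *)
Definition same_cycle N x y :=
  [/\ binary_prefix N x, binary_prefix N y, foreign (y N) &
      forall t, N <= t -> x t = y t].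

Lemma cycle_index_lt N z : cycle_index N z < 2 ^ N.
Proof.
elim: N z => [|N IHN] z //=; have := IHN (shift z).
by rewrite expnS; case: (_ || _) => /=; lia.
Qed.

Lemma has_foreign_gen N z : has_foreign N (gen a z) = has_foreign N z.
Proof.
elim: N z => [|N IHN] z //=; rewrite shift_gen gen_head.
case: (z 0 =P ord0) => [-> | _]; first by rewrite IHN /foreign !eqxx andbF.
by case: (z 0 =P a) => [-> | //]; rewrite /foreign !eqxx andbF.
Qed.

Lemma binary_prefix_shift N z : binary_prefix N.+1 z -> binary_prefix N (shift z).
Proof. by move=> bz t; exact: (bz t.+1). Qed.

Lemma has_foreignF N z : binary_prefix N z -> has_foreign N z = false.
Proof.
elim: N z => [|N IHN] z //= bz; rewrite IHN ?orbF; last exact: binary_prefix_shift.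
by case/orP: (bz 0 isT) => /eqP->; rewrite /foreign eqxx ?andbF.
Qed.

Lemma same_cycle_sym N x y : same_cycle N x y -> same_cycle N y x.
Proof.
case=> bx b_y fy eq_tail; split => //; first by rewrite eq_tail.
by move=> t /eq_tail.
Qed.

Hypothesis a_neq0 : a != ord0.

Lemma eq_ord0_a : (ord0 == a) = false.
Proof. by rewrite eq_sym (negbTE a_neq0). Qed.

Lemma cycle_index_gen_other N i z : (i != a) || has_foreign N z ->
  cycle_index N (gen i z) = cycle_index N z.
Proof.
elim: N z => [|N IHN] z //=; rewrite shift_gen gen_head.
case: (z 0 =P ord0) => [-> | _].
  rewrite /foreign eqxx /= => i_or_foreign; rewrite IHN // eq_ord0_a.
  by case: (i =P a) i_or_foreign => [-> /= | //]; rewrite has_foreign_gen => ->.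
case: (z 0 =P i) => [<- | //]; rewrite eq_ord0_a /foreign.
case: (z 0 =P a) => //= _.
by rewrite andbF => /= ->.
Qed.

Lemma cycle_index_gen N z : ~~ has_foreign N z ->
  cycle_index N (gen a z) = (cycle_index N z + 1) %% 2 ^ N.
Proof.
elim: N z => [|N IHN] z /=; first by rewrite modn1.
rewrite shift_gen gen_head negb_or => /andP[z0_binary no_foreign].
rewrite (negbTE no_foreign) !orbF; case: (z 0 =P ord0) => [z0 | /eqP z0_neq0].
  rewrite eqxx has_foreign_gen (negbTE no_foreign) IHN // z0 eq_ord0_a /=.
  by rewrite expnS muln_modr; congr (_ %% _); lia.
have z0a : z 0 = a by move: z0_binary; rewrite /foreign z0_neq0 negbK => /eqP.
rewrite z0a eqxx eq_ord0_a /= modn_small; first lia.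
by have := cycle_index_lt N (shift z); rewrite expnS; lia.
Qed.

Lemma adj_cycle_index N x y : adj x y ->
  [\/ cycle_index N y = cycle_index N x,
      cycle_index N y = (cycle_index N x + 1) %% 2 ^ N |
      cycle_index N x = (cycle_index N y + 1) %% 2 ^ N].
Proof.
case=> i [_ [-> | ->]].
  case: (boolP ((i != a) || has_foreign N x)) => [other | ].
    by apply: Or31; apply: cycle_index_gen_other.
  by rewrite negb_or negbK => /andP[/eqP-> ?]; apply: Or32; apply: cycle_index_gen.
case: (boolP ((i != a) || has_foreign N y)) => [other | ].
  by apply: Or31; rewrite cycle_index_gen_other.
by rewrite negb_or negbK => /andP[/eqP-> ?]; apply: Or33; apply: cycle_index_gen.
Qed.

Lemma cdist_cycle_index_le n N x y :
  walk n x y -> cdist (2 ^ N) (cycle_index N x) (cycle_index N y) <= n.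
Proof.
elim: n x => [|n IHn] x /=; first by move=> ->; rewrite /cdist; lia.
case=> z [xz zy]; have := IHn _ zy.
have ltx := cycle_index_lt N x; have ltz := cycle_index_lt N z.
have lty := cycle_index_lt N y.
case: (adj_cycle_index N xz) => [-> | -> | ->]; first exact: leqW.
  by move=> le_n; apply: leq_trans (cdist_le_succ ltx lty) _.
by move=> le_n; apply: leq_trans (cdist_succ_le ltz lty) _.
Qed.

Lemma binary_prefix_iter_gen N k z :
  binary_prefix N z -> binary_prefix N (iter k (gen a) z).
Proof.
move=> bz; elim: k => [|k IHk] //= t /IHk; rewrite /gen; case: ifP => // _.
by case/orP=> /eqP->; rewrite ?(negbTE a_neq0) !eqxx ?orbT.
Qed.

Lemma cycle_index_iter_gen N k z : binary_prefix N z ->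
  cycle_index N (iter k (gen a) z) = (cycle_index N z + k) %% 2 ^ N.
Proof.
move=> bz; elim: k => [|k IHk] /=; first by rewrite addn0 modn_small ?cycle_index_lt.
rewrite cycle_index_gen; last by rewrite has_foreignF //; apply: binary_prefix_iter_gen.
by rewrite IHk modnDml -addnA addn1.
Qed.

Lemma cycle_index_inj N x y : binary_prefix N x -> binary_prefix N y ->
  cycle_index N x = cycle_index N y -> forall t, t < N -> x t = y t.
Proof.
elim: N x y => [|N IHN] x y // bx b_y /=.
have [bsx bsy] := (binary_prefix_shift bx, binary_prefix_shift b_y).
rewrite !has_foreignF // !orbF => eq_idx.
have eq_head : (x 0 != a) = (y 0 != a).
  by move: eq_idx; do 2 case: (_ != a); lia.
have eq_tail : cycle_index N (shift x) = cycle_index N (shift y).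
  by move: eq_idx; rewrite eq_head; lia.
case=> [_ | t]; last exact: (IHN _ _ bsx bsy eq_tail t).
case/orP: (bx 0 isT) => /eqP x0; case/orP: (b_y 0 isT) => /eqP y0;
  by move: eq_head; rewrite x0 y0 ?eq_ord0_a ?eqxx.
Qed.

Lemma walk_same_cycle N k x y : same_cycle N x y ->
  (cycle_index N x + k) %% 2 ^ N = cycle_index N y -> walk k x y.
Proof.
case=> bx b_y foreign_yN eq_tail idx_k.
have /andP[xN0 xNa] : foreign (x N) by rewrite eq_tail.
suff <- : iter k (gen a) x = y by apply: walk_iter_gen.
apply: functional_extensionality => t; case: (ltnP t N) => [ltt | leNt].
  apply: cycle_index_inj (binary_prefix_iter_gen k bx) b_y _ _ ltt.
  by rewrite cycle_index_iter_gen.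
by rewrite (iter_gen_eq_from k xN0 xNa leNt) eq_tail.
Qed.

Lemma walk_cdist N x y : same_cycle N x y ->
  walk (cdist (2 ^ N) (cycle_index N x) (cycle_index N y)) x y.
Proof.
wlog le_xy : x y / cycle_index N x <= cycle_index N y.
  move=> sym xy; case: (leqP (cycle_index N x) (cycle_index N y)) => [|/ltnW le_yx].
    by move/sym; apply.
  by rewrite cdist_sym; apply/walk_sym/sym/same_cycle_sym.
move=> xy; have ltx := cycle_index_lt N x; have lty := cycle_index_lt N y.
rewrite /cdist /minn; case: ifP => _.
  apply: walk_same_cycle xy _.
  by rewrite modn_small; lia.
apply: walk_sym; apply: walk_same_cycle (same_cycle_sym xy) _.
have -> : cycle_index N y + (2 ^ N - (cycle_index N x - cycle_index N y +
  (cycle_index N y - cycle_index N x))) = 2 ^ N + cycle_index N x by lia.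
by rewrite modnDl modn_small.
Qed.

Lemma dist_same_cycle N x y : same_cycle N x y ->
  dist x y = cdist (2 ^ N) (cycle_index N x) (cycle_index N y).
Proof.
by move=> xy; apply: dist_shortest (walk_cdist xy) _ => m /cdist_cycle_index_le.
Qed.

Lemma cycle_index_zeros N z :
  (forall t, t < N -> z t = ord0) -> cycle_index N z = 2 ^ N - 1.
Proof.
elim: N z => [|N IHN] z //= zeros.
rewrite IHN => [|t ltt]; last exact: (zeros t.+1).
by rewrite zeros // eq_ord0_a /= expnS; have := expn_gt0 2 N; lia.
Qed.

Lemma cycle_index_block m N z : m < N ->
  (forall t, t < m -> z t = ord0) -> z m = a -> binary_prefix N z ->
  exists q, cycle_index N z = 2 ^ m - 1 + 2 ^ m.+1 * q.
Proof.
elim: m N z => [|m IHm] [|N] z //= ltmN zeros zm bz.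
  rewrite zm eqxx has_foreignF; last exact: binary_prefix_shift.
  by exists (cycle_index N (shift z)).
have [q ->] := IHm N (shift z) ltmN (fun t => zeros t.+1) zm (binary_prefix_shift bz).
rewrite zeros // eq_ord0_a /=; exists q; rewrite !expnS.
by have := expn_gt0 2 m; move: (2 ^ m) => P; nia.
Qed.

End Odometer.

Section Decomposition.
Variables (p : nat) (w : word p) (k : nat) (a : nat -> 'I_p.+1).
Variable u : nat -> seq 'I_p.+1.
Hypothesis decomp : is_decomp w k a u.

Lemma Nj_succ n : Nj k u n.+1 = Nj k u n + 1 + size (u n.+1).
Proof. by rewrite /Nj big_nat_recr //=; lia. Qed.

Lemma wjE n t : wj w k u n t = if t < Nj k u n then ord0 else w t.
Proof.
case: decomp => zeros _; case: n => [|n] //=.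
by rewrite /Nj big_geq // !addn0; case: ifP => // /zeros ->.
Qed.

Lemma binary_prefix_wj n : binary_prefix (a n.+1) (Nj k u n.+1) (wj w k u n).
Proof.
case: decomp => _ /(_ n.+1 isT) [_ _ u_binary w_head w_block] t ltt.
rewrite wjE; case: ltnP => [_ | ]; first by rewrite eqxx.
rewrite leq_eqVlt => /orP[/eqP <- | lt_head]; first by rewrite w_head eqxx orbT.
have -> : t = Nj k u n + 1 + (t - (Nj k u n + 1)) by lia.
rewrite w_block; last by move: ltt; rewrite Nj_succ; lia.
by apply: (all_nthP ord0 u_binary); move: ltt; rewrite Nj_succ; lia.
Qed.

Lemma same_cycle_wj n :
  same_cycle (a n.+1) (Nj k u n.+1) (wj w k u n) (wj w k u n.+1).
Proof.
have ltN : Nj k u n < Nj k u n.+1 by rewrite Nj_succ; lia.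
case: decomp => _ decomp_j.
have [_ next_neq _ _ _] := decomp_j n.+1 isT.
have [next_neq0 _ _ w_next _] := decomp_j n.+2 isT.
split; first exact: binary_prefix_wj.
- by move=> t ltt; rewrite wjE ltt eqxx.
- by rewrite wjE ltnn w_next /foreign next_neq0.
- by move=> t leNt; rewrite !wjE !ltnNge leNt (leq_trans (ltnW ltN) leNt).
Qed.

Lemma logn2_dseq n : logn 2 (dseq w k u n) = Nj k u n.
Proof.
have ltN : Nj k u n < Nj k u n.+1 by rewrite Nj_succ; lia.
case: (decomp) => _ /(_ n.+1 isT) [a_neq0 _ _ w_head _].
rewrite /dseq (dist_same_cycle a_neq0 (same_cycle_wj n)).
have zeros j t : t < Nj k u j -> wj w k u j t = ord0 by move=> ltt; rewrite wjE ltt.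
rewrite (cycle_index_zeros a_neq0 (zeros n.+1)).
have head : wj w k u n (Nj k u n) = a n.+1 by rewrite wjE ltnn; exact: w_head.
have [q idx] := cycle_index_block a_neq0 ltN (zeros n) head (@binary_prefix_wj n).
have := cycle_index_lt (a n.+1) (Nj k u n.+1) (wj w k u n).
rewrite idx => /(cdist_pow2_odd ltN)[r ->].
exact: logn2_pow2_odd.
Qed.

End Decomposition.

Theorem proposition4p20 (p : nat) (hp : 1 <= p) (u v : word p)
  (ku : nat) (au : nat -> 'I_p.+1) (uu : nat -> seq 'I_p.+1)
  (kv : nat) (av : nat -> 'I_p.+1) (uv : nat -> seq 'I_p.+1) :
  E1 u -> E1 v ->
  is_decomp u ku au uu -> is_decomp v kv av uv ->
  compatible (dseq u ku uu) (dseq v kv uv) ->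
  compatible (Lseq ku uu) (Lseq kv uv).
Proof.
move=> _ _ decomp_u decomp_v [l [h eq_d]]; exists l, h => n.
have := congr1 (logn 2) (eq_d n.+1).
by rewrite /Lseq (logn2_dseq decomp_u) (logn2_dseq decomp_v) !addnS => ->.
Qed.
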